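(* Let $\mathcal{G}=(\mathcal{V},\mathcal{E})$ be a graph with node feature vectors $\mathbf{x}_v\in\mathbb{R}^F$ ($v\in\mathcal{V}$), let $\mathcal{V}_L\subseteq\mathcal{V}$ be the set of labeled nodes with one-hot labels $\mathbf{y}_v\in\{0,1\}^C$, and consider a $k$-layer message-passing GNN with layer parameters $\Theta_1,\dots,\Theta_k$, trained on the supervised loss $L_B=-\sum_{v\in\mathcal{V}_L}\sum_{c=1}^C y_{v,c}\log\hat y_{v,c}$ by a training algorithm (gradient updates) that accesses the data only through $L_B$. Let $\Theta^*=\{\Theta_1,\dots,\Theta_k\}$ be the optimal parameters computed by this training algorithm. Then $\Theta^*$ is a function of $\mathbf{X}(\mathcal{N}_k(\mathcal{V}_L))$ and $\mathbf{Y}(\mathcal{V}_L)$ only; in particular, changes in the inputs $\mathbf{X}(\mathcal{V}\setminus\mathcal{N}_k(\mathcal{V}_L))$ do not affect $\Theta^*$.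
   Context: A $k$-layer message-passing GNN computes node representations by $\mathbf{h}_{v,0}=\mathbf{x}_v$ and, for $l=1,\dots,k$, $\mathbf{h}_{v,l}=f_{\Theta_l}\big(\mathbf{h}_{v,l-1},\{\mathbf{h}_{u,l-1}: u\in\mathcal{N}(v)\}\big)$, where $\mathcal{N}(v)$ is the set of graph neighbors of $v$ and $f_{\Theta_l}$ is a learnable aggregator with parameters $\Theta_l$; the prediction $\hat{\mathbf{y}}_v\in\mathbb{R}^C$ (a probability vector over $C$ classes) is computed from the final representation $\mathbf{h}_{v,k}$. $\mathcal{N}_k(v)$ denotes the $k$-hop neighborhood of $v$ (nodes at graph distance at most $k$ from $v$, including $v$); for $S\subseteq\mathcal{V}$, $\mathcal{N}_k(S)=\bigcup_{v\in S}\mathcal{N}_k(v)$, $\mathbf{X}(S)=\{\mathbf{x}_v:v\in S\}$, and $\mathbf{Y}(\mathcal{V}_L)=\{\mathbf{y}_v: v\in\mathcal{V}_L\}$. *)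

From HB Require Import structures.
From mathcomp Require Import all_boot all_order all_algebra.
From mathcomp Require Import reals exp.
Set Implicit Arguments. Unset Strict Implicit. Unset Printing Implicit Defensive.
Import Order.TTheory GRing.Theory Num.Theory.
Local Open Scope ring_scope.

Definition neighbors (V : finType) (e : rel V) (v : V) : seq V :=
  [seq u <- enum V | e v u].

Fixpoint khop (V : finType) (e : rel V) (k : nat) (S : {set V}) : {set V} :=
  match k with
  | 0 => S
  | k'.+1 => let T := khop e k' S in T :|: [set u | [exists w in T, e w u]]
  end.

(* Node representations of the message-passing GNN:
   h_{v,0} = x_v,  h_{v,l+1} = f_l(Theta_l, h_{v,l}, [h_{u,l} : u in N(v)]).
   Layer l+1 of the paper uses parameters th l (indices shifted by one). *)
Fixpoint gnn_rep (V : finType) (e : rel V) (H P : nat -> Type)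
    (f : forall l, P l -> H l -> seq (H l) -> H l.+1)
    (th : forall l, P l) (x : V -> H 0%N) (l : nat) : V -> H l :=
  match l return V -> H l with
  | 0 => x
  | l'.+1 => fun v =>
      f l' (th l') (gnn_rep e f th x l' v)
        [seq gnn_rep e f th x l' u | u <- neighbors e v]
  end.

(* Supervised cross-entropy loss L_B over the labelled nodes VL,
   with readout g mapping h_{v,k} to the probability vector yhat_v. *)
Definition loss_B (R : realType) (V : finType) (e : rel V) (H P : nat -> Type)
    (f : forall l, P l -> H l -> seq (H l) -> H l.+1) (k C : nat)
    (g : H k -> 'I_C -> R) (VL : {set V}) (x : V -> H 0%N) (y : V -> 'I_C -> R)
    (th : forall l, P l) : R :=
  - \sum_(v in VL) \sum_(c < C) y v c * ln (g (gnn_rep e f th x k v) c).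

Definition one_hot (R : realType) (C : nat) (yv : 'I_C -> R) : Prop :=
  exists c0 : 'I_C, forall c, yv c = (c == c0)%:R.

From HB Require Import structures.
From mathcomp Require Import all_boot all_order all_algebra.
From mathcomp Require Import reals exp.
From mathcomp Require Import boolp.
Set Implicit Arguments. Unset Strict Implicit. Unset Printing Implicit Defensive.
Import Order.TTheory GRing.Theory Num.Theory.
Local Open Scope ring_scope.

(* A layer computes h_{v,l+1} from h_{v,l} and the h_{u,l} of the neighbours u
   of v, so by induction h_{v,l} only depends on the features of the l-hop
   neighbourhood of v.  The loss L_B, seen as a function of the parameters,
   is therefore determined by X(N_k(V_L)) and Y(V_L), and so is anything a
   training algorithm computes from it. *)

Section KHop.

Variables (V : finType) (e : rel V).

Lemma khopD (l m : nat) (S : {set V}) :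
  khop e (l + m) S = khop e l (khop e m S).
Proof. by elim: l => //= l ->. Qed.

Lemma khop_subS (m : nat) (S : {set V}) : khop e m S \subset khop e m.+1 S.
Proof. exact: subsetUl. Qed.

Lemma khopS_neighbor (m : nat) (S : {set V}) (v u : V) :
  v \in khop e m S -> e v u -> u \in khop e m.+1 S.
Proof.
move=> v_in evu; rewrite /= in_setU inE; apply/orP; right.
by apply/existsP; exists v; rewrite v_in evu.
Qed.

End KHop.

Lemma gnn_rep_local (V : finType) (e : rel V) (H P : nat -> Type)
    (f : forall l, P l -> H l -> seq (H l) -> H l.+1) (th : forall l, P l)
    (x x' : V -> H 0%N) (l : nat) (S : {set V}) :
  {in khop e l S, x =1 x'} ->
  {in S, gnn_rep e f th x l =1 gnn_rep e f th x' l}.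
Proof.
elim: l S => [|l IH] S eq_x v v_in //=; first exact: eq_x.
have eq_x1 : {in khop e l (khop e 1 S), x =1 x'}.
  by rewrite -khopD addn1.
have eq_rep := IH _ eq_x1.
rewrite eq_rep; last exact: (subsetP (khop_subS e 0 S)).
congr (f l (th l) _ _); apply/eq_in_map => u.
rewrite mem_filter => /andP [evu _].
by apply: eq_rep; apply: (khopS_neighbor (m := 0) v_in).
Qed.

Lemma loss_B_local (R : realType) (V : finType) (e : rel V) (H P : nat -> Type)
    (f : forall l, P l -> H l -> seq (H l) -> H l.+1) (k C : nat)
    (g : H k -> 'I_C -> R) (VL : {set V})
    (x x' : V -> H 0%N) (y y' : V -> 'I_C -> R) :
  {in khop e k VL, x =1 x'} -> {in VL, y =1 y'} ->
  loss_B e f g VL x y =1 loss_B e f g VL x' y'.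
Proof.
move=> eq_x eq_y th; rewrite /loss_B; congr (- _); apply: eq_bigr => v v_in.
by rewrite eq_y // (gnn_rep_local f th eq_x v_in).
Qed.

Theorem proposition1 (R : realType) (V : finType) (e : rel V)
  (He : symmetric e) (k C : nat) (H P : nat -> Type)
  (f : forall l, P l -> H l -> seq (H l) -> H l.+1)
  (g : H k -> 'I_C -> R)
  (Hg : forall h, (forall c, 0 <= g h c) /\ \sum_(c < C) g h c = 1)
  (VL : {set V})
  (train : ((forall l, P l) -> R) -> (forall l, P l))
  (x x' : V -> H 0%N) (y y' : V -> 'I_C -> R)
  (Hy : forall v, v \in VL -> one_hot (y v))
  (Hy' : forall v, v \in VL -> one_hot (y' v))
  (Hx : forall v, v \in khop e k VL -> x v = x' v)
  (HY : forall v, v \in VL -> y v = y' v) :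
  train (loss_B e f g VL x y) = train (loss_B e f g VL x' y').
Proof.
congr (train _); apply: funext.
exact: (loss_B_local f g Hx HY).
Qed.
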